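(* Let $S$ be an average $\tau$-mutation system with $\tau>1$ and starting word of length $m$, and let $Y_n=|S(n)|$. Then there is a constant $C_0$ such that for all $n\ge1$, \[\frac{1}{(n(\tau-1)+m)^2}\,\mathbb{E}\Big[\big(Y_n-n(\tau-1)-m\big)^2\Big]\le\frac{C_0}{n}.\]
   Context: Let $\mathcal{A}=\{a_0,\dots,a_{d-1}\}$. A mutation law assigns to each $a_t$ a finitely supported probability distribution $\mathbb{P}_{a_t}$ on the finite nonempty words over $\mathcal{A}$; $\vartheta(a_t)$ is a random word with law $\mathbb{P}_{a_t}$; it is an average $\tau$-mutation law if $\mathbb{E}|\vartheta(a_t)|=\tau$ for all $t$. A mutation step on $w=w_0\cdots w_{m-1}$ picks $i$ uniformly in $\{0,\dots,m-1\}$ and replaces $w_i$ by an independent sample of $\vartheta(w_i)$. The system is $S(0)=w$, $S(n)=\vartheta(S(n-1))$ with independent randomness at each step. *)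

From mathcomp Require Import all_boot all_order all_algebra.
From mathcomp Require Import reals.
Set Implicit Arguments. Unset Strict Implicit. Unset Printing Implicit Defensive.
Import Order.TTheory GRing.Theory Num.Theory.
Local Open Scope ring_scope.

(* A finitely supported probability distribution on a type T is represented
   by a finite list of (outcome, weight) pairs (repetitions allowed). *)
Definition fdist (R : Type) (T : Type) := seq (T * R).

Definition expect {R : nzRingType} {T : Type} (D : fdist R T) (f : T -> R) : R :=
  \sum_(p <- D) p.2 * f p.1.

Definition mutation_law {R : realType} (d : nat)
    (P : 'I_d -> fdist R (seq 'I_d)) : Prop :=
  forall t : 'I_d,
    (forall p, p \in P t -> 0 <= p.2 /\ (0 < size p.1)%N) /\
    \sum_(p <- P t) p.2 = 1.

Definition avg_mutation_law {R : realType} (d : nat)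
    (P : 'I_d -> fdist R (seq 'I_d)) (tau : R) : Prop :=
  mutation_law P /\ forall t : 'I_d, expect (P t) (fun v => (size v)%:R) = tau.

(* distribution of theta(w): pick i uniformly in {0..m-1}, replace w_i by an
   independent sample of theta(w_i) *)
Definition mutation_step {R : realType} (d : nat)
    (P : 'I_d -> fdist R (seq 'I_d)) (w : seq 'I_d) : fdist R (seq 'I_d) :=
  flatten [seq [seq (take ia.1 w ++ p.1 ++ drop ia.1.+1 w, p.2 / (size w)%:R)
               | p <- P ia.2]
          | ia <- zip (iota 0 (size w)) w].

Definition system_step {R : realType} (d : nat)
    (P : 'I_d -> fdist R (seq 'I_d)) (D : fdist R (seq 'I_d)) : fdist R (seq 'I_d) :=
  flatten [seq [seq (q.1, p.2 * q.2) | q <- mutation_step P p.1] | p <- D].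

Definition system_law {R : realType} (d : nat)
    (P : 'I_d -> fdist R (seq 'I_d)) (w : seq 'I_d) (n : nat) : fdist R (seq 'I_d) :=
  iter n (system_step P) [:: (w, 1)].

From mathcomp Require Import all_boot all_order all_algebra.
From mathcomp Require Import reals.
From mathcomp Require Import ring zify.
Import Order.TTheory GRing.Theory Num.Theory.
Local Open Scope ring_scope.

(* Mutating one letter of [w] replaces it by a word whose length has mean tau,
   so the length grows by tau - 1 in mean: the centred length
   |S(n)| - n(tau - 1) - m is a martingale, and each step adds to its second
   moment at most K, the sum over the letters of the variance of |theta(a_t)|.
   Hence E[(Y_n - n(tau - 1) - m)^2] <= n K, and dividing by
   (n(tau - 1) + m)^2 >= n^2 (tau - 1)^2 gives the claim with
   C_0 = K / (tau - 1)^2. *)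

Section Expectation.
Context {R : realType}.

Lemma eq_expect {T : Type} (D : fdist R T) {f g : T -> R} :
  f =1 g -> expect D f = expect D g.
Proof. by move=> fg; apply: eq_bigr => p _; rewrite fg. Qed.

Lemma expect_flatten {T : Type} (L : seq (fdist R T)) (f : T -> R) :
  expect (flatten L) f = \sum_(D <- L) expect D f.
Proof. exact: big_flatten. Qed.

Lemma expect1 {T : Type} (D : fdist R T) : expect D (fun _ => 1) = \sum_(q <- D) q.2.
Proof. by apply: eq_bigr => q _; rewrite mulr1. Qed.

(* Weights are nonnegative with total mass at most 1.  Mass 1 is not
   preserved in general: the mutation step of the empty word is empty. *)
Definition subprob {T : eqType} (D : fdist R T) : Prop :=
  all (fun q => 0 <= q.2) D /\ \sum_(q <- D) q.2 <= 1.

Lemma expect_subprob_le {T : eqType} {D : fdist R T} {f : T -> R} {c : R} :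
  subprob D -> 0 <= c -> (forall x, f x <= c) -> expect D f <= c.
Proof.
move=> [D_ge0 massD] c_ge0 fc.
apply: (@le_trans _ _ (\sum_(q <- D) q.2 * c)).
  by rewrite /expect !big_seq; apply: ler_sum => q qD; rewrite ler_wpM2l ?(allP D_ge0).
by rewrite -mulr_suml -[leRHS]mul1r ler_wpM2r.
Qed.

End Expectation.

Section MutationSystem.
Context {R : realType} {d : nat}.
Variables (P : 'I_d -> fdist R (seq 'I_d)) (tau : R).
Hypothesis HP : avg_mutation_law P tau.

Definition letter_var (t : 'I_d) : R :=
  expect (P t) (fun v => ((size v)%:R - tau) ^+ 2).

Definition total_letter_var : R := \sum_(t < d) letter_var t.

Lemma law_weight_ge0 t p : p \in P t -> 0 <= p.2.
Proof. by move=> pP; have [/(_ p pP) []] := HP.1 t. Qed.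

Lemma law_mass t : \sum_(p <- P t) p.2 = 1.
Proof. exact: (HP.1 t).2. Qed.

Lemma law_centred t : \sum_(p <- P t) p.2 * ((size p.1)%:R - tau) = 0.
Proof.
under eq_bigr do rewrite mulrBr.
by rewrite sumrB -mulr_suml law_mass mul1r; have := HP.2 t; rewrite /expect => ->; ring.
Qed.

Lemma letter_var_ge0 t : 0 <= letter_var t.
Proof.
rewrite /letter_var /expect big_seq; apply: sumr_ge0 => p pP.
by apply: mulr_ge0; [exact: law_weight_ge0 pP | exact: sqr_ge0].
Qed.

Lemma total_letter_var_ge0 : 0 <= total_letter_var.
Proof. by apply: sumr_ge0 => t _; exact: letter_var_ge0. Qed.

Lemma letter_var_le_total t : letter_var t <= total_letter_var.
Proof.
rewrite /total_letter_var (bigD1 t) //= lerDl.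
by apply: sumr_ge0 => s _; exact: letter_var_ge0.
Qed.

Lemma size_mutate (w v : seq 'I_d) i : (i < size w)%N ->
  (size (take i w ++ v ++ drop i.+1 w))%:R = (size v)%:R + (size w)%:R - 1 :> R.
Proof.
move=> lt_iw; apply: (addIr 1); rewrite subrK natr1 -natrD; apply/eqP.
by rewrite eqr_nat !size_cat size_takel 1?ltnW // size_drop; apply/eqP; lia.
Qed.

(* Bias-variance decomposition of one replacement: the cross term vanishes
   because the lengths of theta(a_t) are centred at tau. *)
Lemma mutate_at_sqdev (w : seq 'I_d) i t c : (i < size w)%N ->
  \sum_(p <- P t) p.2 * ((size (take i w ++ p.1 ++ drop i.+1 w))%:R - c - (tau - 1)) ^+ 2
  = ((size w)%:R - c) ^+ 2 + letter_var t.
Proof.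
move=> lt_iw; rewrite /letter_var /expect (eq_bigr (fun p =>
  p.2 * ((size w)%:R - c) ^+ 2 + ((size w)%:R - c) *+ 2 * (p.2 * ((size p.1)%:R - tau))
  + p.2 * ((size p.1)%:R - tau) ^+ 2)); last by move=> p _; rewrite size_mutate //; ring.
by rewrite !big_split /= -mulr_suml -mulr_sumr law_mass law_centred; ring.
Qed.

Lemma expect_mutation_step w (f : seq 'I_d -> R) :
  expect (mutation_step P w) f =
  \sum_(ia <- zip (iota 0 (size w)) w) \sum_(p <- P ia.2)
     p.2 / (size w)%:R * f (take ia.1 w ++ p.1 ++ drop ia.1.+1 w).
Proof. by rewrite expect_flatten big_map; apply: eq_bigr => ia _; rewrite /expect big_map. Qed.

Lemma mutation_index_lt (w : seq 'I_d) (ia : nat * 'I_d) :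
  ia \in zip (iota 0 (size w)) w -> (ia.1 < size w)%N.
Proof.
move=> /(map_f fst); rewrite -[map fst _]/(unzip1 _) unzip1_zip ?size_iota // mem_iota.
by case/andP.
Qed.

Lemma sum_mutation_indices w (F : nat * 'I_d -> R) c :
  (forall ia, ia \in zip (iota 0 (size w)) w -> F ia <= c) ->
  \sum_(ia <- zip (iota 0 (size w)) w) (size w)%:R^-1 * F ia <= c *+ (size w != 0%N).
Proof.
move=> Fc; apply: (@le_trans _ _ (\sum_(ia <- zip (iota 0 (size w)) w) (size w)%:R^-1 * c)).
  by rewrite !big_seq; apply: ler_sum => ia /Fc Fia; rewrite ler_wpM2l ?invr_ge0.
rewrite big_const_seq count_predT iter_addr_0 size_zip size_iota minnn.
have [->|w_ne0] := eqVneq (size w) 0%N; first by rewrite !mulr0n.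
by rewrite -[_ *+ size w]mulr_natl mulrA mulfV ?pnatr_eq0 // mul1r.
Qed.

Lemma subprob_mutation_step w : subprob (mutation_step P w).
Proof.
split.
  apply/allP => q /flattenP [_ /mapP [ia _ ->] /mapP [p pP ->]] /=.
  by apply: divr_ge0; [exact: law_weight_ge0 pP | exact: ler0n].
rewrite -expect1 expect_mutation_step.
rewrite (eq_bigr (fun ia => (size w)%:R^-1 * \sum_(p <- P ia.2) p.2)); last first.
  by move=> ia _; rewrite mulr_sumr; apply: eq_bigr => p _; rewrite mulr1 mulrC.
apply: le_trans (@sum_mutation_indices w _ 1 _) _ => [ia _|]; first by rewrite law_mass.
by case: (size w != 0%N).
Qed.

Lemma mutation_step_sqdev_le w c :
  expect (mutation_step P w) (fun u => ((size u)%:R - c - (tau - 1)) ^+ 2)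
  <= ((size w)%:R - c) ^+ 2 + total_letter_var.
Proof.
rewrite expect_mutation_step.
rewrite (eq_bigr (fun ia => (size w)%:R^-1 * \sum_(p <- P ia.2)
  p.2 * ((size (take ia.1 w ++ p.1 ++ drop ia.1.+1 w))%:R - c - (tau - 1)) ^+ 2)); last first.
  by move=> ia _; rewrite mulr_sumr; apply: eq_bigr => p _; rewrite mulrAC mulrC.
apply: le_trans (@sum_mutation_indices w _ (((size w)%:R - c) ^+ 2 + total_letter_var) _) _
  => [ia /mutation_index_lt lt_iw|].
  by rewrite mutate_at_sqdev // lerD2l letter_var_le_total.
by case: (size w != 0%N); rewrite ?addr_ge0 ?sqr_ge0 ?total_letter_var_ge0.
Qed.

Lemma expect_system_step D (f : seq 'I_d -> R) :
  expect (system_step P D) f = \sum_(p <- D) p.2 * expect (mutation_step P p.1) f.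
Proof.
rewrite expect_flatten big_map; apply: eq_bigr => p _.
by rewrite /expect big_map mulr_sumr; apply: eq_bigr => q _; rewrite mulrA.
Qed.

Lemma subprob_system_step D : subprob D -> subprob (system_step P D).
Proof.
move=> subD; have [/allP D_ge0 _] := subD; split.
  apply/allP => _ /flattenP [_ /mapP [p pD ->] /mapP [q qM ->]] /=.
  have [/allP q_ge0 _] := subprob_mutation_step p.1.
  by apply: mulr_ge0; [exact: D_ge0 | exact: q_ge0].
rewrite -expect1 expect_system_step.
apply: (expect_subprob_le (f := fun u => expect (mutation_step P u) (fun _ => 1)) subD ler01).
by move=> w; have [_] := subprob_mutation_step w; rewrite expect1.
Qed.

Lemma system_step_sqdev_le D c : subprob D ->
  expect (system_step P D) (fun u => ((size u)%:R - c - (tau - 1)) ^+ 2)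
  <= expect D (fun u => ((size u)%:R - c) ^+ 2) + total_letter_var.
Proof.
move=> subD; have [/allP D_ge0 massD] := subD; rewrite expect_system_step.
apply: (@le_trans _ _ (\sum_(p <- D) p.2 * (((size p.1)%:R - c) ^+ 2 + total_letter_var))).
  by rewrite !big_seq; apply: ler_sum => p pD; rewrite ler_wpM2l ?D_ge0 ?mutation_step_sqdev_le.
rewrite /expect; under eq_bigr do rewrite mulrDr.
rewrite big_split /= lerD2l -mulr_suml -[leRHS]mul1r.
by rewrite ler_wpM2r ?total_letter_var_ge0.
Qed.

Lemma subprob_system_law w n : subprob (system_law P w n).
Proof.
elim: n => [|n IHn]; last exact: subprob_system_step.
by split; rewrite /= ?big_seq1 ?ler01.
Qed.

Lemma system_law_sqdev_le w n :
  expect (system_law P w n)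
    (fun u => ((size u)%:R - (n%:R * (tau - 1) + (size w)%:R)) ^+ 2)
  <= n%:R * total_letter_var.
Proof.
elim: n => [|n IHn].
  by rewrite /expect big_seq1 mul0r add0r subrr expr0n mulr0 mul0r.
rewrite [system_law _ _ n.+1]iterS (eq_expect _ (g := fun u => ((size u)%:R
  - (n%:R * (tau - 1) + (size w)%:R) - (tau - 1)) ^+ 2)); last by move=> u; rewrite -natr1; ring.
apply: le_trans (system_step_sqdev_le _ _ (subprob_system_law w n)) _.
by rewrite -natr1 mulrDl mul1r lerD2r.
Qed.

End MutationSystem.

Theorem mainTheorem11 (R : realType) (d : nat)
    (P : 'I_d -> fdist R (seq 'I_d)) (tau : R) (w : seq 'I_d) :
  avg_mutation_law P tau -> 1 < tau -> (0 < size w)%N ->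
  exists C0 : R, forall n : nat, (1 <= n)%N ->
    (1 / (n%:R * (tau - 1) + (size w)%:R) ^+ 2) *
      expect (system_law P w n)
        (fun v => ((size v)%:R - n%:R * (tau - 1) - (size w)%:R) ^+ 2)
    <= C0 / n%:R.
Proof.
(* The bound holds without assuming that [w] is nonempty. *)
move=> HP tau_gt1 _; set K := total_letter_var P tau.
exists (K / (tau - 1) ^+ 2) => n n_gt0.
have K_ge0 : 0 <= K by exact: total_letter_var_ge0.
have gap_gt0 : 0 < n%:R * (tau - 1) by rewrite mulr_gt0 ?ltr0n ?subr_gt0.
have le_gap : n%:R * (tau - 1) <= n%:R * (tau - 1) + (size w)%:R by rewrite lerDl.
rewrite (eq_expect _ (g := fun v => ((size v)%:R - (n%:R * (tau - 1) + (size w)%:R)) ^+ 2));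
  last by move=> v; ring.
have -> : K / (tau - 1) ^+ 2 / n%:R = 1 / (n%:R * (tau - 1)) ^+ 2 * (n%:R * K).
  by field; rewrite pnatr_eq0 -lt0n n_gt0 subr_eq0 gt_eqF.
apply: (@le_trans _ _ (1 / (n%:R * (tau - 1) + (size w)%:R) ^+ 2 * (n%:R * K))).
  by rewrite ler_wpM2l ?divr_ge0 ?sqr_ge0 // (system_law_sqdev_le _ _ HP).
have sum_gt0 := lt_le_trans gap_gt0 le_gap.
rewrite ler_wpM2r ?mulr_ge0 ?ler0n // !div1r lef_pV2 ?posrE ?exprn_gt0 //.
by rewrite lerXn2r ?nnegrE // ltW.
Qed.
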